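(* For all terms $P,Q$ of $\mathcal{L}$: if $P\equiv Q$ or $P\sim_{\mathrm{HOIO}}Q$, then $d(P)=d(Q)$.
   Context: Calculus $\mathcal{L}$: names are constants ($a,b,c,d$) or name variables ($x,y,z$), $m,n$ range over names; process variables $X,Y,Z$. Terms: $P,Q::=0\mid X\mid m(X).P\mid \overline{m}(Q)\mid P|Q\mid \langle X\rangle P\mid P\langle Q\rangle\mid\langle x\rangle P\mid P\langle n\rangle$, with the usual binders, identified up to $\alpha$-conversion, well-typed and with terminating applications. Structural congruence $\equiv$: smallest congruence with associativity and commutativity of $|$, $P|0\equiv P$, $(\langle X\rangle P)\langle Q\rangle\equiv P\{Q/X\}$, $(\langle x\rangle P)\langle m\rangle\equiv P\{m/x\}$. Transitions: $m(X).P\xrightarrow{m(X)}P$; $\overline{m}Q\xrightarrow{\overline{m}Q}0$; $P\xrightarrow{\lambda}P'$ implies $P|Q\xrightarrow{\lambda}P'|Q$; $P\xrightarrow{\overline{m}A}P'$, $Q\xrightarrow{m(X)}Q'$ imply $P|Q\xrightarrow{\tau}P'|Q'\{A/X\}$; symmetric versions; closure under $\equiv$. Depth $d$: $d(0)=0$, $d(X)=1$, $d(m(X).P)=d(P)+1$, $d(\overline{m}(P))=d(P)+1$, $d(P_1|P_2)=d(P_1)+d(P_2)$, $d(\langle X\rangle P)=d(P)+1$, $d(X\langle P\rangle)=d(P)+1$, $d((\langle Y\rangle P_3)\langle P_2\rangle)=d(P_3\{P_2/Y\})$, $d(\langle x\rangle P)=d(P)+1$, $d(X\langle n\rangle)=1$,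 $d((\langle y\rangle P_3)\langle n\rangle)=d(P_3\{n/y\})$. Strong HO-IO bisimulation: symmetric $R$ on terms such that $P\,R\,Q$ implies: (1) if $P$ is a non-abstraction (not of form $\langle Y\rangle A$ or $\langle y\rangle A$) so is $Q$; (2) if $P=\langle Y\rangle A$ then $Q=\langle Y\rangle B$, $A\,R\,B$; (3) if $P=\langle y\rangle A$ then $Q=\langle y\rangle B$, $A\,R\,B$; (4) if $P\xrightarrow{\overline{a}A}P'$ then $Q\xrightarrow{\overline{a}B}Q'$, $A\,R\,B$, $P'\,R\,Q'$; (5) if $P\xrightarrow{a(X)}P'$ then $Q\xrightarrow{a(X)}Q'$, $P'\,R\,Q'$; (6) if $P\equiv X|P'$ then $Q\equiv X|Q'$, $P'\,R\,Q'$; (7) if $P\equiv X\langle A\rangle|P'$ then $Q\equiv X\langle B\rangle|Q'$, $A\,R\,B$, $P'\,R\,Q'$; (8) if $P\equiv X\langle d\rangle|P'$ then $Q\equiv X\langle d\rangle|Q'$, $P'\,R\,Q'$. $\sim_{\mathrm{HOIO}}$ is the largest such relation. *)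

(* The higher-order calculus L with process/name abstractions,
   represented with de Bruijn indices (two independent index spaces:
   process variables X,Y,Z and name variables x,y,z), so that terms are
   automatically identified up to alpha-conversion. *)
From Stdlib Require Import List Arith.
Import ListNotations.

(* names: constants a,b,c,d (NC) or name variables x,y,z (NV, de Bruijn) *)
Inductive name : Type :=
| NC (c : nat)
| NV (i : nat).

(* terms  P,Q ::= 0 | X | m(X).P | m̄(Q) | P|Q | <X>P | P<Q> | <x>P | P<n> *)
Inductive term : Type :=
| Nil : term
| PVar (i : nat) : term
| Inp (m : name) (P : term) : term (* m(X).P   binds process var 0 in P *)
| Out (m : name) (Q : term) : term
| Par (P Q : term) : term
| PAbs (P : term) : term           (* <X>P     binds process var 0 in P *)
| PApp (P Q : term) : term
| NAbs (P : term) : term           (* <x>P     binds name var 0 in P *)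
| NApp (P : term) (n : name) : term.

Fixpoint shiftP (c : nat) (P : term) : term :=
  match P with
  | Nil => Nil
  | PVar i => if c <=? i then PVar (Datatypes.S i) else PVar i
  | Inp m P => Inp m (shiftP (Datatypes.S c) P)
  | Out m Q => Out m (shiftP c Q)
  | Par P Q => Par (shiftP c P) (shiftP c Q)
  | PAbs P => PAbs (shiftP (Datatypes.S c) P)
  | PApp P Q => PApp (shiftP c P) (shiftP c Q)
  | NAbs P => NAbs (shiftP c P)
  | NApp P n => NApp (shiftP c P) n
  end.

Definition shiftNname (c : nat) (n : name) : name :=
  match n with
  | NC a => NC a
  | NV i => if c <=? i then NV (Datatypes.S i) else NV i
  end.

Fixpoint shiftN (c : nat) (P : term) : term :=
  match P with
  | Nil => Nil
  | PVar i => PVar i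
  | Inp m P => Inp (shiftNname c m) (shiftN c P)
  | Out m Q => Out (shiftNname c m) (shiftN c Q)
  | Par P Q => Par (shiftN c P) (shiftN c Q)
  | PAbs P => PAbs (shiftN c P)
  | PApp P Q => PApp (shiftN c P) (shiftN c Q)
  | NAbs P => NAbs (shiftN (Datatypes.S c) P)
  | NApp P n => NApp (shiftN c P) (shiftNname c n)
  end.

(* substP k Q P = P{Q/X_k}; Q lives in the context outside the binder of X_k *)
Fixpoint substP (k : nat) (Q : term) (P : term) : term :=
  match P with
  | Nil => Nil
  | PVar i => if i =? k then Q else if k <? i then PVar (pred i) else PVar i
  | Inp m P => Inp m (substP (Datatypes.S k) (shiftP 0 Q) P)
  | Out m R => Out m (substP k Q R)
  | Par P1 P2 => Par (substP k Q P1) (substP k Q P2)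
  | PAbs P => PAbs (substP (Datatypes.S k) (shiftP 0 Q) P)
  | PApp P1 P2 => PApp (substP k Q P1) (substP k Q P2)
  | NAbs P => NAbs (substP k (shiftN 0 Q) P)
  | NApp P n => NApp (substP k Q P) n
  end.

Definition substNname (k : nat) (n : name) (m : name) : name :=
  match m with
  | NC a => NC a
  | NV i => if i =? k then n else if k <? i then NV (pred i) else NV i
  end.

Fixpoint substN (k : nat) (n : name) (P : term) : term :=
  match P with
  | Nil => Nil
  | PVar i => PVar i
  | Inp m P => Inp (substNname k n m) (substN k n P)
  | Out m Q => Out (substNname k n m) (substN k n Q)
  | Par P1 P2 => Par (substN k n P1) (substN k n P2)
  | PAbs P => PAbs (substN k n P)
  | PApp P1 P2 => PApp (substN k n P1) (substN k n P2)
  | NAbs P => NAbs (substN (Datatypes.S k) (shiftNname 0 n) P)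
  | NApp P m => NApp (substN k n P) (substNname k n m)
  end.

(* TPr: processes; TAbs T: process abstractions <X>P with X : T;
   TNAbs T: name abstractions <x>P with x a channel carrying values of type T.
   A name has a "sort": the type of the values it carries. *)
Inductive ty : Type :=
| TPr
| TAbs (T : ty)
| TNAbs (T : ty).

Definition name_ty (srt : nat -> ty) (GN : list ty) (n : name) : option ty :=
  match n with
  | NC a => Some (srt a)
  | NV i => nth_error GN i
  end.

Inductive typed (srt : nat -> ty) : list ty -> list ty -> term -> ty -> Prop :=
| ty_nil GN GP : typed srt GN GP Nil TPr
| ty_var GN GP i T : nth_error GP i = Some T -> typed srt GN GP (PVar i) T
| ty_inp GN GP m T P :
    name_ty srt GN m = Some T -> typed srt GN (T :: GP) P TPr ->
    typed srt GN GP (Inp m P) TPr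
| ty_out GN GP m T Q :
    name_ty srt GN m = Some T -> typed srt GN GP Q T ->
    typed srt GN GP (Out m Q) TPr
| ty_par GN GP P Q :
    typed srt GN GP P TPr -> typed srt GN GP Q TPr ->
    typed srt GN GP (Par P Q) TPr
| ty_pabs GN GP T P :
    typed srt GN (T :: GP) P TPr -> typed srt GN GP (PAbs P) (TAbs T)
| ty_papp GN GP T P Q :
    typed srt GN GP P (TAbs T) -> typed srt GN GP Q T ->
    typed srt GN GP (PApp P Q) TPr
| ty_nabs GN GP T P :
    typed srt (T :: GN) GP P TPr -> typed srt GN GP (NAbs P) (TNAbs T)
| ty_napp GN GP T P n :
    typed srt GN GP P (TNAbs T) -> name_ty srt GN n = Some T ->
    typed srt GN GP (NApp P n) TPr.

(* P is a term of L *)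
Definition well_typed (P : term) : Prop :=
  exists srt GN GP T, typed srt GN GP P T.

Inductive cong : term -> term -> Prop :=
| cg_refl P : cong P P
| cg_sym P Q : cong P Q -> cong Q P
| cg_trans P Q R : cong P Q -> cong Q R -> cong P R
| cg_par_comm P Q : cong (Par P Q) (Par Q P)
| cg_par_assoc P Q R : cong (Par (Par P Q) R) (Par P (Par Q R))
| cg_par_nil P : cong (Par P Nil) P
| cg_beta_P P Q : cong (PApp (PAbs P) Q) (substP 0 Q P)
| cg_beta_N P n : cong (NApp (NAbs P) n) (substN 0 n P)
| cg_inp m P P' : cong P P' -> cong (Inp m P) (Inp m P')
| cg_out m Q Q' : cong Q Q' -> cong (Out m Q) (Out m Q')
| cg_par P P' Q Q' : cong P P' -> cong Q Q' -> cong (Par P Q) (Par P' Q')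
| cg_pabs P P' : cong P P' -> cong (PAbs P) (PAbs P')
| cg_papp P P' Q Q' : cong P P' -> cong Q Q' -> cong (PApp P Q) (PApp P' Q')
| cg_nabs P P' : cong P P' -> cong (NAbs P) (NAbs P')
| cg_napp P P' n : cong P P' -> cong (NApp P n) (NApp P' n).

(* LIn m stands for m(X); the target of an input transition has the received
   variable X free as process index 0. *)
Inductive label : Type :=
| LOut (m : name) (A : term)
| LIn (m : name)
| LTau.

Inductive lts : term -> label -> term -> Prop :=
| lt_inp m P : lts (Inp m P) (LIn m) P
| lt_out m Q : lts (Out m Q) (LOut m Q) Nil
| lt_par_l_out P P' Q m A : lts P (LOut m A) P' -> lts (Par P Q) (LOut m A) (Par P' Q)
| lt_par_l_tau P P' Q : lts P LTau P' -> lts (Par P Q) LTau (Par P' Q)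
| lt_par_l_in P P' Q m : lts P (LIn m) P' -> lts (Par P Q) (LIn m) (Par P' (shiftP 0 Q))
| lt_par_r_out P Q Q' m A : lts Q (LOut m A) Q' -> lts (Par P Q) (LOut m A) (Par P Q')
| lt_par_r_tau P Q Q' : lts Q LTau Q' -> lts (Par P Q) LTau (Par P Q')
| lt_par_r_in P Q Q' m : lts Q (LIn m) Q' -> lts (Par P Q) (LIn m) (Par (shiftP 0 P) Q')
| lt_comm_l P P' Q Q' m A :
    lts P (LOut m A) P' -> lts Q (LIn m) Q' -> lts (Par P Q) LTau (Par P' (substP 0 A Q'))
| lt_comm_r P P' Q Q' m A :
    lts P (LIn m) P' -> lts Q (LOut m A) Q' -> lts (Par P Q) LTau (Par (substP 0 A P') Q')
| lt_struct P P1 P1' P' l :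
    cong P P1 -> lts P1 l P1' -> cong P1' P' -> lts P l P'.

Definition is_abstraction (P : term) : Prop :=
  (exists A, P = PAbs A) \/ (exists A, P = NAbs A).

Definition is_hoio_bisim (R : term -> term -> Prop) : Prop :=
  (forall P Q, R P Q -> R Q P) /\
  forall P Q, R P Q ->
    (* (1) *) (~ is_abstraction P -> ~ is_abstraction Q) /\
    (* (2) *) (forall A, P = PAbs A -> exists B, Q = PAbs B /\ R A B) /\
    (* (3) *) (forall A, P = NAbs A -> exists B, Q = NAbs B /\ R A B) /\
    (* (4) *) (forall m A P', lts P (LOut m A) P' ->
                 exists B Q', lts Q (LOut m B) Q' /\ R A B /\ R P' Q') /\
    (* (5) *) (forall m P', lts P (LIn m) P' ->
                 exists Q', lts Q (LIn m) Q' /\ R P' Q') /\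
    (* (6) *) (forall i P', cong P (Par (PVar i) P') ->
                 exists Q', cong Q (Par (PVar i) Q') /\ R P' Q') /\
    (* (7) *) (forall i A P', cong P (Par (PApp (PVar i) A) P') ->
                 exists B Q', cong Q (Par (PApp (PVar i) B) Q') /\ R A B /\ R P' Q') /\
    (* (8) *) (forall i n P', cong P (Par (NApp (PVar i) n) P') ->
                 exists Q', cong Q (Par (NApp (PVar i) n) Q') /\ R P' Q').

Definition hoio_bisimilar (P Q : term) : Prop :=
  exists R, is_hoio_bisim R /\ R P Q.

(* ---------- depth d, as the (partial) function given by its clauses ---------- *)
Inductive depth : term -> nat -> Prop :=
| d_nil : depth Nil 0
| d_var i : depth (PVar i) 1
| d_inp m P k : depth P k -> depth (Inp m P) (Datatypes.S k)
| d_out m P k : depth P k -> depth (Out m P) (Datatypes.S k)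
| d_par P1 P2 k1 k2 : depth P1 k1 -> depth P2 k2 -> depth (Par P1 P2) (k1 + k2)
| d_pabs P k : depth P k -> depth (PAbs P) (Datatypes.S k)
| d_varapp i P k : depth P k -> depth (PApp (PVar i) P) (Datatypes.S k)
| d_beta_P P3 P2 k : depth (substP 0 P2 P3) k -> depth (PApp (PAbs P3) P2) k
| d_nabs P k : depth P k -> depth (NAbs P) (Datatypes.S k)
| d_varnapp i n : depth (NApp (PVar i) n) 1
| d_beta_N P3 n k : depth (substN 0 n P3) k -> depth (NApp (NAbs P3) n) k.

(* We interpret every term as a set of "tokens" in an environment
   that assigns a token set to each process variable.  A token [TNum n] says
   "behaves as a process of depth n"; [TFun e m] says "behaves as a process
   abstraction that, applied to an argument exhibiting the finitely many tokens
   [e], exhibits [m]"; [TNm m] is the analogue for name abstractions.  Free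
   variables are interpreted by [Var], which mirrors the clauses [d(X) = 1],
   [d(X<P>) = d(P) + 1] and [d(X<n>) = 1].

   1. The interpretation is sound for structural congruence (beta included,
      thanks to monotonicity and continuity), and a term of depth [k] has
      [TNum k] as its only numeric token.  This settles the case [P ≡ Q] once
      [Q] is known to have some depth.
   2. A labelled transition is reflected numerically: [P -m̄A-> P'] makes [P]
      behave as [m̄A | P'], and [P -m(X)-> P'] as [m(X).P'].
   3. Every well-typed term has a depth (a normalization argument, by
      induction on the type of the substituted variable).
   4. A well-typed non-abstraction of positive depth exhibits one of the
      observations tested by clauses (4)-(8) of bisimulation, which splits its
      depth into depths of strictly smaller well-typed pieces.
   5. By strong induction on the depth of [P], if [R P Q] for a bisimulation
      [R] then the depth of [P] is at most any numeric token of [Q]; applying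
      this in both directions gives equality. *)

From Stdlib Require Import List Arith Lia FunctionalExtensionality PropExtensionality Setoid.
Import ListNotations.

Inductive tok : Type :=
| TNum (n : nat)
| TFun (e : list tok) (m : tok)
| TNm (m : tok).

Definition val := tok -> Prop.

Definition env := nat -> val.

Definition scons (v : val) (r : env) : env :=
  fun i => match i with 0 => v | S j => r j end.

Definition setof (e : list tok) : val := fun x => In x e.

Definition Var : val := fun t =>
  t = TNum 1 \/ (exists k, t = TFun [TNum k] (TNum (S k))) \/ t = TNm (TNum 1).

(* Numeric tokens of a parallel composition
   add up; its functional tokens are those of either component, which keeps
   [P | 0 ≡ P] sound also when [P] is an abstraction. *)
Fixpoint sem (P : term) (r : env) (t : tok) {struct P} : Prop :=
  match P with
  | Nil => t = TNum 0
  | PVar i => r i t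
  | Inp _ P => match t with TNum (S k) => sem P (scons Var r) (TNum k) | _ => False end
  | Out _ P => match t with TNum (S k) => sem P r (TNum k) | _ => False end
  | Par P Q =>
      match t with
      | TNum j => exists a b, j = a + b /\ sem P r (TNum a) /\ sem Q r (TNum b)
      | _ => sem P r t \/ sem Q r t
      end
  | PAbs P =>
      match t with
      | TNum (S k) => sem P (scons Var r) (TNum k)
      | TFun e m => sem P (scons (setof e) r) m
      | _ => False
      end
  | PApp P Q => exists e, sem P r (TFun e t) /\ Forall (sem Q r) e
  | NAbs P =>
      match t with
      | TNum (S k) => sem P r (TNum k)
      | TNm m => sem P r m
      | _ => False
      end
  | NApp P _ => sem P r (TNm t)
  end.

Definition le_env (r r' : env) : Prop := forall i t, r i t -> r' i t.

Lemma le_env_scons v r r' : le_env r r' -> le_env (scons v r) (scons v r').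
Proof. intros H [|i] t; simpl; auto. Qed.

Lemma sem_mono P : forall r r' t, le_env r r' -> sem P r t -> sem P r' t.
Proof.
  induction P; intros r r' t Hle; simpl.
  - auto.
  - apply Hle.
  - destruct t as [[|k]| |]; eauto using le_env_scons.
  - destruct t as [[|k]| |]; eauto.
  - destruct t; firstorder eauto.
  - destruct t as [[|k]| |]; eauto using le_env_scons.
  - intros [e [H1 H2]]; exists e; split; eauto.
    eapply Forall_impl; [|exact H2]; eauto.
  - destruct t as [[|k]| |]; eauto.
  - eauto.
Qed.

Definition upd (r : env) (k : nat) (v : val) : env := fun i => if i =? k then v else r i.

Definition env_monotone (F : env -> Prop) : Prop :=
  forall r r', le_env r r' -> F r -> F r'.

Definition finitely_used (r : env) (k : nat) (F : env -> Prop) : Prop :=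
  exists e, Forall (r k) e /\ F (upd r k (setof e)).

Lemma upd_incl r k e e' : incl e e' -> le_env (upd r k (setof e)) (upd r k (setof e')).
Proof. intros H i x; unfold upd, setof. destruct (i =? k); auto. Qed.

Lemma finitely_used_and r k F G :
  env_monotone F -> env_monotone G ->
  finitely_used r k F -> finitely_used r k G -> finitely_used r k (fun r' => F r' /\ G r').
Proof.
  intros HF HG [e1 [He1 H1]] [e2 [He2 H2]].
  exists (e1 ++ e2); split; [apply Forall_app; auto|split].
  - eapply HF; [|exact H1]. apply upd_incl, incl_appl, incl_refl.
  - eapply HG; [|exact H2]. apply upd_incl, incl_appr, incl_refl.
Qed.

Lemma env_monotone_Forall (F : env -> tok -> Prop) l :
  (forall t, env_monotone (fun r => F r t)) -> env_monotone (fun r => Forall (F r) l).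
Proof. intros HF r r' Hle. apply Forall_impl. intros t; apply HF, Hle. Qed.

Lemma finitely_used_Forall r k (F : env -> tok -> Prop) l :
  (forall t, env_monotone (fun r' => F r' t)) ->
  Forall (fun t => finitely_used r k (fun r' => F r' t)) l ->
  finitely_used r k (fun r' => Forall (F r') l).
Proof.
  intros HF. induction 1 as [|t l Ht _ IH].
  - exists []; auto.
  - destruct (finitely_used_and r k _ _ (HF t) (env_monotone_Forall F l HF) Ht IH)
      as [e [He [H1 H2]]].
    exists e; auto.
Qed.

Lemma upd_scons w r k v : upd (scons w r) (S k) v = scons w (upd r k v).
Proof. apply functional_extensionality; intros [|i]; reflexivity. Qed.

Lemma finitely_used_scons w r k F :
  finitely_used (scons w r) (S k) F -> finitely_used r k (fun r' => F (scons w r')).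
Proof. intros [e [He H]]. exists e. rewrite upd_scons in H. auto. Qed.

(* Continuity: every token of a term only uses finitely many tokens of each
   variable.  This is what makes beta-conversion sound for the application
   clause, which feeds a function token a finite list of argument tokens. *)
Lemma sem_finitely_used P : forall r t k, sem P r t -> finitely_used r k (fun r' => sem P r' t).
Proof.
  induction P; intros r t k; simpl.
  - intros ->. exists []; auto.
  - intros H. destruct (Nat.eqb_spec i k) as [->|Hne].
    + exists [t]. unfold upd. rewrite Nat.eqb_refl. simpl; auto.
    + exists []. unfold upd. apply Nat.eqb_neq in Hne. rewrite Hne. auto.
  - destruct t as [[|j]| |]; try contradiction.
    intros H. apply (finitely_used_scons Var r k (fun r' => sem P r' _)), IHP, H.
  - destruct t as [[|j]| |]; try contradiction. apply IHP.
  - destruct t.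
    + intros (a & b & -> & H1 & H2).
      destruct (finitely_used_and r k _ _ (fun r1 r2 => sem_mono P1 r1 r2 _)
                  (fun r1 r2 => sem_mono P2 r1 r2 _) (IHP1 _ _ k H1) (IHP2 _ _ k H2))
        as [e [He [H1' H2']]].
      exists e; split; eauto.
    + intros [H|H]; [destruct (IHP1 _ _ k H)|destruct (IHP2 _ _ k H)]; firstorder.
    + intros [H|H]; [destruct (IHP1 _ _ k H)|destruct (IHP2 _ _ k H)]; firstorder.
  - destruct t as [[|j]| |]; try contradiction; intros H.
    + apply (finitely_used_scons Var r k (fun r' => sem P r' _)), IHP, H.
    + apply (finitely_used_scons (setof e) r k (fun r' => sem P r' _)), IHP, H.
  - intros [e0 [H1 H2]].
    assert (Ha : finitely_used r k (fun r' => Forall (sem P2 r') e0)).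
    { apply finitely_used_Forall; [intros x r1 r2; apply sem_mono|].
      eapply Forall_impl; [|exact H2]. intros x; apply IHP2. }
    destruct (finitely_used_and r k _ _ (fun r1 r2 => sem_mono P1 r1 r2 _)
                (env_monotone_Forall _ e0 (fun x r1 r2 => sem_mono P2 r1 r2 x))
                (IHP1 _ _ k H1) Ha) as [e [He [H1' H2']]].
    exists e; split; eauto.
  - destruct t as [[|j]| |]; try contradiction; apply IHP.
  - apply IHP.
Qed.

(* The environment transformations corresponding to [shiftP] and [substP]. *)
Definition lift (c : nat) (r : env) : env := fun i => r (if c <=? i then S i else i).

Definition ins (k : nat) (v : val) (r : env) : env :=
  fun i => if i =? k then v else if k <? i then r (pred i) else r i.

Lemma lift_scons c v r : lift (S c) (scons v r) = scons v (lift c r).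
Proof.
  apply functional_extensionality; intros [|i]; unfold lift; simpl; auto.
  destruct (c <=? i); auto.
Qed.

Lemma ins_scons k w v r : ins (S k) w (scons v r) = scons v (ins k w r).
Proof.
  apply functional_extensionality; intros [|i]; unfold ins; simpl; try reflexivity.
  destruct (i =? k); auto. destruct i; simpl; [destruct k|]; reflexivity.
Qed.

Lemma ins0 v r : ins 0 v r = scons v r.
Proof. apply functional_extensionality; intros [|i]; reflexivity. Qed.

Lemma sem_papp_iff P1 P2 P1' P2' r r' t :
  (forall t, sem P1 r t <-> sem P1' r' t) -> (forall t, sem P2 r t <-> sem P2' r' t) ->
  (sem (PApp P1 P2) r t <-> sem (PApp P1' P2') r' t).
Proof.
  intros H1 H2; simpl; split; intros [e [A B]]; exists e; split;
    try (apply H1; auto); eapply Forall_impl; try eassumption; intros; apply H2; auto.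
Qed.

Lemma sem_shiftP P : forall c r t, sem (shiftP c P) r t <-> sem P (lift c r) t.
Proof.
  induction P; intros c r t; cbn [shiftP]; try (apply sem_papp_iff; intros; auto; fail); simpl.
  - reflexivity.
  - unfold lift. destruct (c <=? i); reflexivity.
  - destruct t as [[|k]| |]; try reflexivity. rewrite IHP, lift_scons. reflexivity.
  - destruct t as [[|k]| |]; try reflexivity. apply IHP.
  - destruct t; setoid_rewrite IHP1; setoid_rewrite IHP2; reflexivity.
  - destruct t as [[|k]| |]; try reflexivity; rewrite IHP, lift_scons; reflexivity.
  - destruct t as [[|k]| |]; try reflexivity; apply IHP.
  - apply IHP.
Qed.

Lemma sem_shiftN P : forall c r t, sem (shiftN c P) r t <-> sem P r t.
Proof.
  induction P; intros c r t; cbn [shiftN]; try (apply sem_papp_iff; intros; auto; fail); simpl;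
    try reflexivity; try (destruct t as [[|k]| |]; try reflexivity; apply IHP).
  destruct t; setoid_rewrite IHP1; setoid_rewrite IHP2; reflexivity.
Qed.

Lemma sem_substN P : forall k n r t, sem (substN k n P) r t <-> sem P r t.
Proof.
  induction P; intros k n' r t; cbn [substN]; try (apply sem_papp_iff; intros; auto; fail); simpl;
    try reflexivity; try (destruct t as [[|j]| |]; try reflexivity; apply IHP).
  destruct t; setoid_rewrite IHP1; setoid_rewrite IHP2; reflexivity.
Qed.

Lemma val_ext (u v : val) : (forall t, u t <-> v t) -> u = v.
Proof.
  intros H; apply functional_extensionality; intros t; apply propositional_extensionality; auto.
Qed.

Lemma sem_shiftP0 Q v r : sem (shiftP 0 Q) (scons v r) = sem Q r.
Proof. apply val_ext; intros t. apply sem_shiftP. Qed.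

Lemma sem_substP P : forall k Q r t, sem (substP k Q P) r t <-> sem P (ins k (sem Q r) r) t.
Proof.
  induction P; intros k Q r t; cbn [substP]; try (apply sem_papp_iff; intros; auto; fail); simpl.
  - reflexivity.
  - unfold ins. destruct (i =? k); [reflexivity|]. destruct (k <? i); reflexivity.
  - destruct t as [[|j]| |]; try reflexivity.
    rewrite IHP, sem_shiftP0, ins_scons. reflexivity.
  - destruct t as [[|j]| |]; try reflexivity. apply IHP.
  - destruct t; setoid_rewrite IHP1; setoid_rewrite IHP2; reflexivity.
  - destruct t as [[|j]| |]; try reflexivity; rewrite IHP, sem_shiftP0, ins_scons; reflexivity.
  - assert (HQ : sem (shiftN 0 Q) r = sem Q r) by (apply val_ext; intros; apply sem_shiftN).
    destruct t as [[|j]| |]; try reflexivity; rewrite IHP, HQ; reflexivity.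
  - rewrite IHP. reflexivity.
Qed.

Lemma upd_scons0 v r e : upd (scons v r) 0 (setof e) = scons (setof e) r.
Proof. apply functional_extensionality; intros [|i]; reflexivity. Qed.

Lemma sem_beta P Q r t : sem (PApp (PAbs P) Q) r t <-> sem P (scons (sem Q r) r) t.
Proof.
  simpl. split.
  - intros [e [H HQ]]. eapply sem_mono; [|exact H].
    intros [|i] x; simpl; auto. intros Hx. rewrite Forall_forall in HQ. auto.
  - intros H. destruct (sem_finitely_used _ _ _ 0 H) as [e [He H']].
    exists e. rewrite upd_scons0 in H'. auto.
Qed.

Lemma sem_cong P Q : cong P Q -> forall r t, sem P r t <-> sem Q r t.
Proof.
  induction 1; intros r t.
  - reflexivity.
  - symmetry; auto.
  - rewrite IHcong1; auto.
  - simpl. destruct t; [|tauto|tauto].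
    split; intros (a & b & -> & H1 & H2); exists b, a; rewrite Nat.add_comm; auto.
  - simpl. destruct t; [|tauto|tauto]. split.
    + intros (ab & c & -> & (a & b & -> & Ha & Hb) & Hc).
      exists a, (b + c). rewrite Nat.add_assoc. repeat split; eauto.
    + intros (a & bc & -> & Ha & (b & c & -> & Hb & Hc)).
      exists (a + b), c. rewrite Nat.add_assoc. repeat split; eauto.
  - simpl. destruct t as [j| |]; [split|intuition discriminate|intuition discriminate].
    + intros (a & b & -> & H & Hb). injection Hb as ->. rewrite Nat.add_0_r. auto.
    + intros H. exists j, 0. rewrite Nat.add_0_r. auto.
  - rewrite sem_beta, sem_substP, ins0. reflexivity.
  - rewrite sem_substN. reflexivity.
  - simpl. destruct t as [[|j]| |]; try reflexivity. apply IHcong.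
  - simpl. destruct t as [[|j]| |]; try reflexivity. apply IHcong.
  - simpl. destruct t; setoid_rewrite IHcong1; setoid_rewrite IHcong2; reflexivity.
  - simpl. destruct t as [[|j]| |]; try reflexivity; apply IHcong.
  - apply sem_papp_iff; auto.
  - simpl. destruct t as [[|j]| |]; try reflexivity; apply IHcong.
  - simpl. apply IHcong.
Qed.

Definition Vars : env := fun _ => Var.

Lemma scons_Vars : scons Var Vars = Vars.
Proof. apply functional_extensionality; intros [|i]; reflexivity. Qed.

Definition sem_depth (P : term) (j : nat) : Prop := sem P Vars (TNum j).

Lemma Var_TNum j : Var (TNum j) <-> j = 1.
Proof.
  unfold Var. split; [intros [H|[[k H]|H]]; congruence|intros ->; auto].
Qed.

Lemma Var_TFun e j : Var (TFun e (TNum j)) <-> exists k, e = [TNum k] /\ j = S k.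
Proof.
  unfold Var. split.
  - intros [H|[[k H]|H]]; try discriminate. injection H as -> ->. eauto.
  - intros (k & -> & ->). eauto.
Qed.

Lemma Var_TNm j : Var (TNm (TNum j)) <-> j = 1.
Proof.
  unfold Var. split; [intros [H|[[k H]|H]]; congruence|intros ->; auto].
Qed.

Lemma depth_sem P k : depth P k -> forall j, sem_depth P j <-> j = k.
Proof.
  unfold sem_depth. induction 1; intros j; simpl.
  - split; [injection 1|intros ->]; auto.
  - apply Var_TNum.
  - rewrite scons_Vars. destruct j; [split; [contradiction|discriminate]|].
    rewrite IHdepth. lia.
  - destruct j; [split; [contradiction|discriminate]|]. rewrite IHdepth. lia.
  - split.
    + intros (a & b & -> & H1 & H2). apply IHdepth1 in H1. apply IHdepth2 in H2. lia.
    + intros ->. exists k1, k2. rewrite IHdepth1, IHdepth2. auto.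
  - rewrite scons_Vars. destruct j; [split; [contradiction|discriminate]|]. rewrite IHdepth. lia.
  - split.
    + intros (e & He & HP). apply Var_TFun in He as (b & -> & ->).
      inversion HP as [|x l Hb]. apply IHdepth in Hb. lia.
    + intros ->. exists [TNum k]. rewrite Var_TFun. split; eauto.
      constructor; auto. apply IHdepth. reflexivity.
  - rewrite <- IHdepth. exact (sem_cong _ _ (cg_beta_P P3 P2) Vars (TNum j)).
  - destruct j; [split; [contradiction|discriminate]|]. rewrite IHdepth. lia.
  - apply Var_TNm.
  - rewrite <- IHdepth. exact (sem_cong _ _ (cg_beta_N P3 n) Vars (TNum j)).
Qed.

Lemma depth_sem_self P k : depth P k -> sem_depth P k.
Proof. intros HD. apply (depth_sem P k HD). reflexivity. Qed.

Lemma sem_depth_par P Q j :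
  sem_depth (Par P Q) j <-> exists a b, j = a + b /\ sem_depth P a /\ sem_depth Q b.
Proof. reflexivity. Qed.

Lemma sem_depth_pabs B q : sem_depth (PAbs B) q -> exists b, q = S b /\ sem_depth B b.
Proof.
  destruct q as [|b]; [contradiction|]. unfold sem_depth; simpl. rewrite scons_Vars. eauto.
Qed.

Lemma sem_depth_nabs B q : sem_depth (NAbs B) q -> exists b, q = S b /\ sem_depth B b.
Proof. destruct q as [|b]; [contradiction|]. eauto. Qed.

Lemma sem_depth_var i x : sem_depth (PVar i) x -> x = 1.
Proof. apply Var_TNum. Qed.

Lemma sem_depth_varapp i B x : sem_depth (PApp (PVar i) B) x ->
  exists b, x = S b /\ sem_depth B b.
Proof.
  intros (e & He & HB). apply Var_TFun in He as (b & -> & ->).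
  inversion HB; subst. eauto.
Qed.

Lemma sem_depth_varnapp i n x : sem_depth (NApp (PVar i) n) x -> x = 1.
Proof. apply Var_TNm. Qed.

Lemma sem_depth_cong_par P X P' q : cong P (Par X P') -> sem_depth P q ->
  exists x p, q = x + p /\ sem_depth X x /\ sem_depth P' p.
Proof. intros C Hq. apply sem_depth_par, (sem_cong _ _ C Vars (TNum q)), Hq. Qed.

Definition num_equiv (P Q : term) : Prop := forall r j, sem P r (TNum j) <-> sem Q r (TNum j).

Definition label_sem (P : term) (l : label) (P' : term) : Prop :=
  match l with
  | LOut m A => num_equiv P (Par (Out m A) P')
  | LIn m => num_equiv P (Inp m P')
  | LTau => True
  end.

Lemma num_equiv_par P1 P2 Q1 Q2 :
  num_equiv P1 Q1 -> num_equiv P2 Q2 -> num_equiv (Par P1 P2) (Par Q1 Q2).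
Proof.
  unfold num_equiv. intros H1 H2 r j. simpl. setoid_rewrite H1. setoid_rewrite H2. reflexivity.
Qed.

Lemma num_equiv_cong P Q : cong P Q -> num_equiv P Q.
Proof. intros C r j. apply sem_cong, C. Qed.

Lemma lts_label_sem P l P' : lts P l P' -> label_sem P l P'.
Proof.
  induction 1; unfold label_sem, num_equiv in *; auto.
  - intros r [|j]; simpl; try tauto.
  - apply num_equiv_cong, cg_sym, cg_par_nil.
  - intros r j. rewrite (num_equiv_par _ _ _ _ IHlts (fun r j => iff_refl _) r j).
    apply num_equiv_cong, cg_par_assoc.
  - intros r j. simpl. setoid_rewrite IHlts. rewrite sem_shiftP0. split.
    + intros (a & b & -> & Ha & Hb). destruct a; [contradiction|]. exists a, b; auto.
    + intros Hj. destruct j; [contradiction|]. destruct Hj as (a & b & -> & Ha & Hb).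
      exists (S a), b. auto.
  - intros r j. rewrite (num_equiv_par _ _ _ _ (fun r j => iff_refl _) IHlts r j).
    apply num_equiv_cong.
    eapply cg_trans; [apply cg_sym, cg_par_assoc|].
    eapply cg_trans; [apply cg_par; [apply cg_par_comm|apply cg_refl]|apply cg_par_assoc].
  - intros r j. simpl. setoid_rewrite IHlts. rewrite sem_shiftP0. split.
    + intros (a & b & -> & Ha & Hb). destruct b; [contradiction|].
      rewrite Nat.add_succ_r. exists a, b. auto.
    + intros Hj. destruct j; [contradiction|]. destruct Hj as (a & b & -> & Ha & Hb).
      exists a, (S b). rewrite Nat.add_succ_r; auto.
  - destruct l; auto; intros r j; rewrite (num_equiv_cong _ _ H r j), IHlts.
    + exact (num_equiv_cong _ _ (cg_par _ _ _ _ (cg_refl _) H1) r j).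
    + exact (num_equiv_cong _ _ (cg_inp _ _ _ H1) r j).
Qed.

Lemma sem_depth_out P m B P' q : lts P (LOut m B) P' -> sem_depth P q ->
  exists b p, q = S (b + p) /\ sem_depth B b /\ sem_depth P' p.
Proof.
  intros Ht Hq. apply (lts_label_sem _ _ _ Ht) in Hq.
  destruct Hq as ([|b] & p & -> & Hb & Hp); [contradiction|]. exists b, p. auto.
Qed.

Lemma sem_depth_in P m P' q : lts P (LIn m) P' -> sem_depth P q ->
  exists p, q = S p /\ sem_depth P' p.
Proof.
  intros Ht Hq. apply (lts_label_sem _ _ _ Ht) in Hq.
  destruct q as [|p]; [contradiction|]. simpl in Hq. rewrite scons_Vars in Hq. eauto.
Qed.

Ltac nat_cases :=
  repeat (first [ match goal with
                  | |- context [?a <=? ?b] => destruct (Nat.leb_spec a b)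
                  | |- context [?a =? ?b] => destruct (Nat.eqb_spec a b)
                  | |- context [?a <? ?b] => destruct (Nat.ltb_spec a b)
                  | |- context [match ?i with 0 => _ | S _ => _ end] => destruct i
                  end
                | progress simpl ]);
  try (exfalso; lia); try reflexivity; try (f_equal; lia).

Lemma substNname_shiftNname m : forall j n, substNname j n (shiftNname j m) = m.
Proof. destruct m; intros; unfold substNname, shiftNname; nat_cases. Qed.

Lemma substNname_substNname x : forall j k n m, k <= j ->
  substNname j n (substNname k m x) =
  substNname k (substNname j n m) (substNname (S j) (shiftNname k n) x).
Proof.
  destruct x; intros; unfold substNname at 2 4; nat_cases;
    rewrite ?substNname_shiftNname; nat_cases.
Qed.

Lemma shiftNname_shiftNname n : forall c c', c' <= c ->
  shiftNname (S c) (shiftNname c' n) = shiftNname c' (shiftNname c n).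
Proof. destruct n; intros; unfold shiftNname; nat_cases. Qed.

Lemma shiftNname_substNname_ge m : forall k c n, k <= c ->
  shiftNname c (substNname k n m) = substNname k (shiftNname c n) (shiftNname (S c) m).
Proof. destruct m; intros; unfold substNname, shiftNname; nat_cases. Qed.

Lemma shiftNname_substNname_le m : forall k c n, c <= k ->
  shiftNname c (substNname k n m) = substNname (S k) (shiftNname c n) (shiftNname c m).
Proof. destruct m; intros; unfold substNname, shiftNname; nat_cases. Qed.

Lemma shiftP_shiftP Q : forall c c', c' <= c -> shiftP (S c) (shiftP c' Q) = shiftP c' (shiftP c Q).
Proof. induction Q; intros c c' H; simpl; nat_cases; f_equal; auto; apply IHQ; lia. Qed.

Lemma shiftP_shiftN Q : forall c d, shiftP c (shiftN d Q) = shiftN d (shiftP c Q).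
Proof. induction Q; intros; simpl; nat_cases; f_equal; auto. Qed.

Lemma shiftN_shiftN Q : forall d d', d' <= d -> shiftN (S d) (shiftN d' Q) = shiftN d' (shiftN d Q).
Proof. induction Q; intros d d' H; simpl; f_equal; auto using shiftNname_shiftNname with arith. Qed.

Lemma shiftP_substP_ge P : forall c k Q, k <= c ->
  shiftP c (substP k Q P) = substP k (shiftP c Q) (shiftP (S c) P).
Proof.
  induction P; intros c k Q H; simpl; nat_cases; f_equal; auto;
    rewrite IHP by lia; f_equal; auto using shiftP_shiftP, shiftP_shiftN with arith.
Qed.

Lemma shiftP_substP_le P : forall c k Q, c <= k ->
  shiftP c (substP k Q P) = substP (S k) (shiftP c Q) (shiftP c P).
Proof.
  induction P; intros c k Q H; simpl; nat_cases; f_equal; auto;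
    rewrite IHP by lia; f_equal; auto using shiftP_shiftP, shiftP_shiftN with arith.
Qed.

Lemma shiftP_substN P : forall c k n, shiftP c (substN k n P) = substN k n (shiftP c P).
Proof. induction P; intros; simpl; nat_cases; f_equal; auto. Qed.

Lemma shiftN_substP P : forall c k Q, shiftN c (substP k Q P) = substP k (shiftN c Q) (shiftN c P).
Proof.
  induction P; intros c k Q; simpl; nat_cases; f_equal; auto;
    rewrite IHP; f_equal; auto using shiftN_shiftN, eq_sym, shiftP_shiftN with arith.
Qed.

Lemma shiftN_substN_ge P : forall c k n, k <= c ->
  shiftN c (substN k n P) = substN k (shiftNname c n) (shiftN (S c) P).
Proof.
  induction P; intros c k a H; simpl; f_equal; auto using shiftNname_substNname_ge.
  rewrite IHP by lia. f_equal. apply shiftNname_shiftNname; lia.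
Qed.

Lemma shiftN_substN_le P : forall c k n, c <= k ->
  shiftN c (substN k n P) = substN (S k) (shiftNname c n) (shiftN c P).
Proof.
  induction P; intros c k a H; simpl; f_equal; auto using shiftNname_substNname_le.
  rewrite IHP by lia. f_equal. apply shiftNname_shiftNname; lia.
Qed.

Lemma substN_substP P : forall j n k Q,
  substN j n (substP k Q P) = substP k (substN j n Q) (substN j n P).
Proof.
  induction P; intros j a k Q; simpl; nat_cases; f_equal; auto; rewrite IHP; f_equal.
  - symmetry; apply shiftP_substN.
  - symmetry; apply shiftP_substN.
  - symmetry; apply shiftN_substN_le; lia.
Qed.

Lemma substN_substN P : forall j k n m, k <= j ->
  substN j n (substN k m P) = substN k (substNname j n m) (substN (S j) (shiftNname k n) P).
Proof.
  induction P; intros j k a b H; simpl; f_equal; auto using substNname_substNname.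
  rewrite IHP by lia. f_equal.
  - symmetry. apply shiftNname_substNname_le. lia.
  - f_equal. apply shiftNname_shiftNname; lia.
Qed.

Lemma substP_shiftP P : forall j X, substP j X (shiftP j P) = P.
Proof. induction P; intros; simpl; nat_cases; f_equal; auto. Qed.

Lemma substN_shiftN P : forall j n, substN j n (shiftN j P) = P.
Proof. induction P; intros; simpl; f_equal; auto using substNname_shiftNname. Qed.

Lemma substP_substP P : forall j k Q R, j <= k ->
  substP k Q (substP j R P) = substP j (substP k Q R) (substP (S k) (shiftP j Q) P).
Proof.
  induction P; intros j k Q R H; simpl; nat_cases; rewrite ?substP_shiftP; auto; f_equal; auto;
    rewrite IHP by lia; f_equal.
  - symmetry. apply shiftP_substP_le. lia.
  - f_equal. apply shiftP_shiftP; lia.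
  - symmetry. apply shiftP_substP_le. lia.
  - f_equal. apply shiftP_shiftP; lia.
  - symmetry. apply shiftN_substP.
  - f_equal. apply shiftP_shiftN.
Qed.

Lemma substP_substN P : forall k Q j n,
  substP k Q (substN j n P) = substN j n (substP k (shiftN j Q) P).
Proof.
  induction P; intros k Q j a; simpl; nat_cases; rewrite ?substN_shiftN; auto; f_equal; auto;
    rewrite IHP; do 2 f_equal; auto using eq_sym, shiftP_shiftN, shiftN_shiftN with arith.
Qed.

Lemma depth_shiftP P k : depth P k -> forall c, depth (shiftP c P) k.
Proof.
  induction 1; intros c; simpl; nat_cases; constructor; auto.
  - rewrite <- shiftP_substP_ge by lia. auto.
  - rewrite <- shiftP_substN. auto.
Qed.

Lemma depth_shiftN P k : depth P k -> forall c, depth (shiftN c P) k.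
Proof.
  induction 1; intros c; simpl; constructor; auto.
  - rewrite <- shiftN_substP. auto.
  - rewrite <- shiftN_substN_ge by lia. auto.
Qed.

Lemma depth_substN P k : depth P k -> forall j n, depth (substN j n P) k.
Proof.
  induction 1; intros j a; simpl; constructor; auto.
  - rewrite <- substN_substP. auto.
  - rewrite <- substN_substN by lia. auto.
Qed.

Definition shifted_ctx (c : nat) (G G' : list ty) : Prop :=
  forall i, nth_error G' (if c <=? i then S i else i) = nth_error G i.

Definition removed_ctx (k : nat) (G G' : list ty) : Prop :=
  (forall i, i < k -> nth_error G' i = nth_error G i) /\
  (forall i, k < i -> nth_error G' (pred i) = nth_error G i).

Lemma shifted_ctx_0 T G : shifted_ctx 0 G (T :: G).
Proof. intros i. reflexivity. Qed.

Lemma shifted_ctx_cons T c G G' : shifted_ctx c G G' -> shifted_ctx (S c) (T :: G) (T :: G').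
Proof. intros H [|i]; simpl; auto. specialize (H i). destruct (c <=? i); auto. Qed.

Lemma removed_ctx_0 T G : removed_ctx 0 (T :: G) G.
Proof. split; intros [|i] Hi; simpl; auto; lia. Qed.

Lemma removed_ctx_cons T k G G' : removed_ctx k G G' -> removed_ctx (S k) (T :: G) (T :: G').
Proof.
  intros [H1 H2]. split.
  - intros [|i] Hi; simpl; auto. apply H1; lia.
  - intros [|[|i]] Hi; simpl; try lia. apply (H2 (S i)); lia.
Qed.

Lemma name_ty_shift srt GN GN' c m :
  shifted_ctx c GN GN' -> name_ty srt GN' (shiftNname c m) = name_ty srt GN m.
Proof. intros H; destruct m; simpl; auto. rewrite <- H. destruct (c <=? i); auto. Qed.

Lemma name_ty_subst srt GN GN' k U n m T :
  nth_error GN k = Some U -> removed_ctx k GN GN' ->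
  name_ty srt GN' n = Some U -> name_ty srt GN m = Some T ->
  name_ty srt GN' (substNname k n m) = Some T.
Proof.
  intros Hk [H1 H2] Hn Hm. destruct m as [a|i]; simpl in *; auto.
  destruct (Nat.eqb_spec i k) as [->|]; [congruence|].
  destruct (Nat.ltb_spec k i); simpl; [rewrite H2|rewrite H1]; auto; lia.
Qed.

Lemma typed_shiftP srt GN GP P T : typed srt GN GP P T ->
  forall c GP', shifted_ctx c GP GP' -> typed srt GN GP' (shiftP c P) T.
Proof.
  induction 1; intros c GP' Hc; simpl.
  2: specialize (Hc i); destruct (c <=? i); constructor; congruence.
  all: econstructor; eauto using shifted_ctx_cons.
Qed.

Lemma typed_shiftN srt GN GP P T : typed srt GN GP P T ->
  forall c GN', shifted_ctx c GN GN' -> typed srt GN' GP (shiftN c P) T.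
Proof.
  induction 1; intros c GN' Hc; simpl; econstructor;
    rewrite ?(name_ty_shift srt GN GN'); eauto using shifted_ctx_cons.
Qed.

Lemma typed_substP srt GN GP P T : typed srt GN GP P T ->
  forall k U GP' Q, nth_error GP k = Some U -> removed_ctx k GP GP' ->
  typed srt GN GP' Q U -> typed srt GN GP' (substP k Q P) T.
Proof.
  induction 1; intros k U GP' R Hk Hrem HR; simpl.
  2: { destruct Hrem as [H1 H2]. destruct (Nat.eqb_spec i k) as [->|]; [congruence|].
       destruct (Nat.ltb_spec k i); constructor; [rewrite H2|rewrite H1]; auto; lia. }
  all: econstructor; eauto using removed_ctx_cons, typed_shiftP, shifted_ctx_0, typed_shiftN.
Qed.

Lemma typed_substN srt GN GP P T : typed srt GN GP P T ->
  forall k U GN' n, nth_error GN k = Some U -> removed_ctx k GN GN' ->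
  name_ty srt GN' n = Some U -> typed srt GN' GP (substN k n P) T.
Proof.
  induction 1; intros k U GN' a Hk Hrem Ha; simpl; econstructor;
    eauto using name_ty_subst, removed_ctx_cons.
  eapply IHtyped; eauto using removed_ctx_cons.
  rewrite (name_ty_shift srt GN' (T :: GN') 0 a); auto using shifted_ctx_0.
Qed.

Lemma typed_beta_P srt GN GP T P Q :
  typed srt GN (T :: GP) P TPr -> typed srt GN GP Q T -> typed srt GN GP (substP 0 Q P) TPr.
Proof. intros HP HQ. eapply typed_substP; eauto using removed_ctx_0. reflexivity. Qed.

Lemma typed_beta_N srt GN GP T P n :
  typed srt (T :: GN) GP P TPr -> name_ty srt GN n = Some T -> typed srt GN GP (substN 0 n P) TPr.
Proof. intros HP Hn. eapply typed_substN; eauto using removed_ctx_0. reflexivity. Qed.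

Lemma typed_well_typed srt GN GP P T : typed srt GN GP P T -> well_typed P.
Proof. intros H. exists srt, GN, GP, T. exact H. Qed.

Lemma typed_TAbs srt GN GP X T : typed srt GN GP X (TAbs T) ->
  (exists i, X = PVar i) \/ (exists X0, X = PAbs X0 /\ typed srt GN (T :: GP) X0 TPr).
Proof. intros H; inversion H; subst; eauto. Qed.

Lemma typed_TNAbs srt GN GP X T : typed srt GN GP X (TNAbs T) ->
  (exists i, X = PVar i) \/ (exists X0, X = NAbs X0 /\ typed srt (T :: GN) GP X0 TPr).
Proof. intros H; inversion H; subst; eauto. Qed.

Lemma depth_PAbs_inv X k : depth (PAbs X) k -> exists k0, k = S k0 /\ depth X k0.
Proof. intros H; inversion H; subst; eauto. Qed.

Lemma depth_NAbs_inv X k : depth (NAbs X) k -> exists k0, k = S k0 /\ depth X k0.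
Proof. intros H; inversion H; subst; eauto. Qed.

Definition has_depth (P : term) : Prop := exists k, depth P k.

Lemma has_depth_shiftP c Q : has_depth Q -> has_depth (shiftP c Q).
Proof. intros [k Hk]. exists k. apply depth_shiftP, Hk. Qed.

Lemma has_depth_shiftN c Q : has_depth Q -> has_depth (shiftN c Q).
Proof. intros [k Hk]. exists k. apply depth_shiftN, Hk. Qed.

Definition subst_normalizes (T : ty) : Prop :=
  forall P kP, depth P kP -> forall srt GN GP Tp k GP' Q,
  typed srt GN GP P Tp -> nth_error GP k = Some T -> removed_ctx k GP GP' ->
  typed srt GN GP' Q T -> has_depth Q -> has_depth (substP k Q P).

Lemma papp_normalizes T srt GN GP Q A :
  subst_normalizes T -> typed srt GN GP Q (TAbs T) -> has_depth Q ->
  typed srt GN GP A T -> has_depth A -> has_depth (PApp Q A).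
Proof.
  intros HT HQ [kQ DQ] HA [kA DA].
  destruct (typed_TAbs _ _ _ _ _ HQ) as [[i ->]|[Q0 [-> HQ0]]].
  - exists (S kA). constructor; auto.
  - destruct (depth_PAbs_inv _ _ DQ) as [kQ0 [_ DQ0]].
    assert (has_depth (substP 0 A Q0)) as [k Hk]
      by (eapply HT; eauto using removed_ctx_0; exists kA; auto).
    exists k. constructor; auto.
Qed.

Lemma napp_normalizes T srt GN GP Q n :
  typed srt GN GP Q (TNAbs T) -> has_depth Q -> has_depth (NApp Q n).
Proof.
  intros HQ [kQ DQ].
  destruct (typed_TNAbs _ _ _ _ _ HQ) as [[i ->]|[Q0 [-> _]]].
  - exists 1. constructor.
  - destruct (depth_NAbs_inv _ _ DQ) as [kQ0 [_ DQ0]].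
    exists kQ0. constructor. apply depth_substN, DQ0.
Qed.

Section SubstNormalization.

Variable T : ty.

Hypothesis IHT : forall T', T = TAbs T' -> subst_normalizes T'.

(* By induction on the depth of the host term; the only interesting case is
   the substituted variable in head position [X<P>], handled by
   [papp_normalizes] at the smaller type. *)
Lemma subst_normalizes_step : subst_normalizes T.
Proof.
  intros P kP HD.
  induction HD as [|i|m P d HD IH|m P d HD IH|P1 P2 d1 d2 HD1 IH1 HD2 IH2|P d HD IH|i P d HD IH
                  |P3 P2 d HD IH|P d HD IH|i n|P3 n d HD IH];
    intros srt GN GP Tp k GP' Q HT Hk Hrem HQ DQ; simpl.
  - exists 0; constructor.
  - destruct (i =? k); [exact DQ|]. destruct (k <? i); eexists; constructor.
  - inversion HT; subst.
    assert (has_depth (substP (S k) (shiftP 0 Q) P)) as [j Hj] by (eapply IH;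
      eauto using removed_ctx_cons, typed_shiftP, shifted_ctx_0, has_depth_shiftP).
    exists (S j); constructor; auto.
  - inversion HT; subst.
    destruct (IH srt GN GP T0 k GP' Q) as [j Hj]; auto. exists (S j); constructor; auto.
  - inversion HT; subst.
    destruct (IH1 srt GN GP TPr k GP' Q) as [j1 Hj1]; auto.
    destruct (IH2 srt GN GP TPr k GP' Q) as [j2 Hj2]; auto.
    exists (j1 + j2); constructor; auto.
  - inversion HT; subst.
    assert (has_depth (substP (S k) (shiftP 0 Q) P)) as [j Hj] by (eapply IH;
      eauto using removed_ctx_cons, typed_shiftP, shifted_ctx_0, has_depth_shiftP).
    exists (S j); constructor; auto.
  - inversion HT as [| | | | | |? ? T0 ? ? HV HP| |]; subst.
    inversion HV as [|? ? ? ? Hi| | | | | | |]; subst.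
    assert (HPs : has_depth (substP k Q P)) by (eapply IH; eauto).
    destruct (Nat.eqb_spec i k) as [->|Hik].
    + rewrite Hk in Hi. injection Hi as ->.
      eapply papp_normalizes; [apply IHT; reflexivity|..]; eauto using typed_substP.
    + destruct HPs as [j Hj]. destruct (k <? i); exists (S j); constructor; auto.
  - inversion HT as [| | | | | |? ? T0 ? ? HA HP| |]; subst. inversion HA; subst.
    assert (has_depth (substP k Q (substP 0 P2 P3))) as [j Hj]
      by (eapply IH; eauto using typed_beta_P).
    rewrite substP_substP in Hj by lia. exists j; constructor; auto.
  - inversion HT; subst.
    assert (has_depth (substP k (shiftN 0 Q) P)) as [j Hj]
      by (eapply IH; eauto using typed_shiftN, shifted_ctx_0, has_depth_shiftN).
    exists (S j); constructor; auto.
  - inversion HT as [| | | | | | | |? ? T0 ? ? HV Hn]; subst.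
    inversion HV as [|? ? ? ? Hi| | | | | | |]; subst.
    destruct (Nat.eqb_spec i k) as [->|Hik].
    + rewrite Hk in Hi. injection Hi as ->. eapply napp_normalizes; eauto.
    + destruct (k <? i); eexists; constructor.
  - inversion HT as [| | | | | | | |? ? T0 ? ? HA Hn]; subst. inversion HA; subst.
    assert (has_depth (substP k Q (substN 0 n P3))) as [j Hj]
      by (eapply IH; eauto using typed_beta_N).
    rewrite substP_substN in Hj. exists j; constructor; auto.
Qed.

End SubstNormalization.

Lemma subst_normalizes_all T : subst_normalizes T.
Proof. induction T; apply subst_normalizes_step; intros T' E; inversion E; subst; auto. Qed.

Lemma typed_has_depth srt GN GP P T : typed srt GN GP P T -> has_depth P.
Proof.
  induction 1; try destruct IHtyped as [k Hk].
  - exists 0; constructor.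
  - exists 1; constructor.
  - exists (S k); constructor; auto.
  - exists (S k); constructor; auto.
  - destruct IHtyped1 as [k1 Hk1], IHtyped2 as [k2 Hk2]. exists (k1 + k2); constructor; auto.
  - exists (S k); constructor; auto.
  - eapply papp_normalizes; eauto using subst_normalizes_all.
  - exists (S k); constructor; auto.
  - eapply napp_normalizes; eauto. exists k; auto.
Qed.

Section Observations.

Variables (srt : nat -> ty) (GN GP : list ty).

(* The observations tested by clauses (4)-(8) of HO-IO bisimulation, each
   splitting the depth [k] into depths of well-typed pieces. *)
Inductive observation (P : term) : nat -> Prop :=
| obs_out m A P' U a p :
    lts P (LOut m A) P' -> typed srt GN GP A U -> depth A a ->
    typed srt GN GP P' TPr -> depth P' p -> observation P (S (a + p))
| obs_in m P' U p :
    lts P (LIn m) P' -> typed srt GN (U :: GP) P' TPr -> depth P' p -> observation P (S p)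
| obs_var i P' p :
    cong P (Par (PVar i) P') -> typed srt GN GP P' TPr -> depth P' p -> observation P (S p)
| obs_varapp i A P' U a p :
    cong P (Par (PApp (PVar i) A) P') -> typed srt GN GP A U -> depth A a ->
    typed srt GN GP P' TPr -> depth P' p -> observation P (S (a + p))
| obs_varnapp i n P' p :
    cong P (Par (NApp (PVar i) n) P') -> typed srt GN GP P' TPr -> depth P' p ->
    observation P (S p).

Lemma observation_cong P P2 k : cong P P2 -> observation P2 k -> observation P k.
Proof.
  intros C []; [eapply obs_out|eapply obs_in|eapply obs_var|eapply obs_varapp|eapply obs_varnapp];
    eauto using lt_struct, cg_refl, cg_trans.
Qed.

Lemma cong_par_extract X P1 P2 P' :
  cong P1 (Par X P') -> cong (Par P1 P2) (Par X (Par P' P2)).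
Proof. intros C. eapply cg_trans; [apply cg_par; [exact C|apply cg_refl]|apply cg_par_assoc]. Qed.

Lemma observation_par_l P1 P2 k1 k2 :
  observation P1 k1 -> typed srt GN GP P2 TPr -> depth P2 k2 ->
  observation (Par P1 P2) (k1 + k2).
Proof.
  intros [] HT HD; simpl; rewrite <- ?Nat.add_assoc.
  - eapply obs_out; eauto using lt_par_l_out; constructor; auto.
  - eapply obs_in; eauto using lt_par_l_in; constructor; eauto using depth_shiftP.
    eapply typed_shiftP; eauto using shifted_ctx_0.
  - eapply obs_var; eauto using cong_par_extract; constructor; auto.
  - eapply obs_varapp; eauto using cong_par_extract; constructor; auto.
  - eapply obs_varnapp; eauto using cong_par_extract; constructor; auto.
Qed.

Lemma observation_par_r P1 P2 k1 k2 :
  observation P2 k2 -> typed srt GN GP P1 TPr -> depth P1 k1 ->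
  observation (Par P1 P2) (k1 + k2).
Proof.
  intros Ho HT HD. rewrite Nat.add_comm.
  eapply observation_cong; [apply cg_par_comm|]. apply observation_par_l; auto.
Qed.

Lemma typed_process_not_abstraction X : typed srt GN GP X TPr -> ~ is_abstraction X.
Proof. intros H [[A ->]|[A ->]]; inversion H. Qed.

Lemma typed_observation P k : depth P k -> forall T, typed srt GN GP P T ->
  0 < k -> ~ is_abstraction P -> observation P k.
Proof.
  induction 1 as [|i|m P d HD IH|m P d HD IH|P1 P2 d1 d2 HD1 IH1 HD2 IH2|P d HD IH|i P d HD IH
                 |P3 P2 d HD IH|P d HD IH|i n|P3 n d HD IH];
    intros T HT Hk Hna; try (exfalso; apply Hna; red; eauto; fail).
  - lia.
  - eapply (obs_var _ i Nil 0); [apply cg_sym, cg_par_nil|constructor..].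
  - inversion HT; subst. eapply obs_in; eauto. apply lt_inp.
  - inversion HT; subst. rewrite <- (Nat.add_0_r d).
    eapply (obs_out _ m P Nil); eauto; [apply lt_out|constructor..].
  - inversion HT; subst. destruct d1 as [|d1].
    + apply observation_par_r; auto.
      eapply IH2; eauto using typed_process_not_abstraction.
    + apply observation_par_l; auto.
      eapply IH1; eauto using typed_process_not_abstraction; lia.
  - inversion HT as [| | | | | |? ? U ? ? HV HP| |]; subst. rewrite <- (Nat.add_0_r d).
    eapply (obs_varapp _ i P Nil); eauto; [apply cg_sym, cg_par_nil|constructor..].
  - inversion HT as [| | | | | |? ? U ? ? HA HP| |]; subst. inversion HA; subst.
    eapply observation_cong; [apply cg_beta_P|].
    eapply IH; eauto using typed_beta_P, typed_process_not_abstraction.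
  - eapply (obs_varnapp _ i n Nil 0); [apply cg_sym, cg_par_nil|constructor..].
  - inversion HT as [| | | | | | | |? ? U ? ? HA Hn]; subst. inversion HA; subst.
    eapply observation_cong; [apply cg_beta_N|].
    eapply IH; eauto using typed_beta_N, typed_process_not_abstraction.
Qed.

End Observations.

Lemma abstraction_cases P :
  (exists A, P = PAbs A) \/ (exists A, P = NAbs A) \/ ~ is_abstraction P.
Proof. destruct P; eauto; right; right; intros [[A H]|[A H]]; discriminate. Qed.

Section DepthBound.

Variable R : term -> term -> Prop.

Hypothesis HR : is_hoio_bisim R.

Definition bounded_below (k : nat) : Prop :=
  forall P Q, R P Q -> well_typed P -> depth P k -> forall q, sem_depth Q q -> k <= q.

(* Inductive step for non-abstractions: the clause of bisimulation matching an
   observation of [P] yields a matching piece of [Q], whose semantic depth splits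
   like the depth of [P]. *)
Lemma observation_bound srt GN GP k P Q q :
  (forall a, a < k -> bounded_below a) -> R P Q -> observation srt GN GP P k ->
  sem_depth Q q -> k <= q.
Proof.
  intros IH HPQ Hobs Hq.
  destruct (proj2 HR P Q HPQ) as (_ & _ & _ & Cout & Cin & Cvar & Cvarapp & Cvarnapp).
  destruct Hobs as [m A P' U a p Ht HA DA HP' DP'|m P' U p Ht HP' DP'|i P' p C HP' DP'
                   |i A P' U a p C HA DA HP' DP'|i n P' p C HP' DP'].
  - destruct (Cout m A P' Ht) as (B & Q' & HtQ & HAB & HPQ').
    destruct (sem_depth_out _ _ _ _ _ HtQ Hq) as (b & y & -> & Hb & Hy).
    pose proof (IH a ltac:(lia) A B HAB (typed_well_typed _ _ _ _ _ HA) DA b Hb).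
    pose proof (IH p ltac:(lia) P' Q' HPQ' (typed_well_typed _ _ _ _ _ HP') DP' y Hy). lia.
  - destruct (Cin m P' Ht) as (Q' & HtQ & HPQ').
    destruct (sem_depth_in _ _ _ _ HtQ Hq) as (y & -> & Hy).
    pose proof (IH p ltac:(lia) P' Q' HPQ' (typed_well_typed _ _ _ _ _ HP') DP' y Hy). lia.
  - destruct (Cvar i P' C) as (Q' & CQ & HPQ').
    destruct (sem_depth_cong_par _ _ _ _ CQ Hq) as (x & y & -> & Hx & Hy).
    apply sem_depth_var in Hx as ->.
    pose proof (IH p ltac:(lia) P' Q' HPQ' (typed_well_typed _ _ _ _ _ HP') DP' y Hy). lia.
  - destruct (Cvarapp i A P' C) as (B & Q' & CQ & HAB & HPQ').
    destruct (sem_depth_cong_par _ _ _ _ CQ Hq) as (x & y & -> & Hx & Hy).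
    apply sem_depth_varapp in Hx as (b & -> & Hb).
    pose proof (IH a ltac:(lia) A B HAB (typed_well_typed _ _ _ _ _ HA) DA b Hb).
    pose proof (IH p ltac:(lia) P' Q' HPQ' (typed_well_typed _ _ _ _ _ HP') DP' y Hy). lia.
  - destruct (Cvarnapp i n P' C) as (Q' & CQ & HPQ').
    destruct (sem_depth_cong_par _ _ _ _ CQ Hq) as (x & y & -> & Hx & Hy).
    apply sem_depth_varnapp in Hx as ->.
    pose proof (IH p ltac:(lia) P' Q' HPQ' (typed_well_typed _ _ _ _ _ HP') DP' y Hy). lia.
Qed.

(* By strong induction on [k]: abstractions are matched by clauses (2)-(3),
   other terms of positive depth by their observations. *)
Lemma bisim_depth_bound k : bounded_below k.
Proof.
  induction k as [k IH] using (well_founded_induction lt_wf).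
  intros P Q HPQ [srt [GN [GP [T HT]]]] HD q Hq.
  destruct (proj2 HR P Q HPQ) as (_ & Cpabs & Cnabs & _).
  destruct (abstraction_cases P) as [[A ->]|[[A ->]|Hna]].
  - destruct (Cpabs A eq_refl) as [B [-> HAB]].
    destruct (depth_PAbs_inv _ _ HD) as [a [-> DA]].
    destruct (sem_depth_pabs _ _ Hq) as [b [-> Hb]].
    inversion HT as [| | | | |? ? U ? HA| | | ]; subst.
    pose proof (IH a ltac:(lia) A B HAB (typed_well_typed _ _ _ _ _ HA) DA b Hb). lia.
  - destruct (Cnabs A eq_refl) as [B [-> HAB]].
    destruct (depth_NAbs_inv _ _ HD) as [a [-> DA]].
    destruct (sem_depth_nabs _ _ Hq) as [b [-> Hb]].
    inversion HT as [| | | | | | |? ? U ? HA| ]; subst.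
    pose proof (IH a ltac:(lia) A B HAB (typed_well_typed _ _ _ _ _ HA) DA b Hb). lia.
  - destruct (Nat.eq_dec k 0) as [->|Hk]; [lia|].
    eapply observation_bound; eauto.
    eapply typed_observation; eauto; lia.
Qed.

End DepthBound.

(* Depth transfers from [P] to a congruent or bisimilar well-typed [Q]: [Q]
   has some depth, which equals that of [P] by soundness of the model or by
   the bound applied in both directions. *)
Lemma related_depth_transfer P Q : well_typed P -> well_typed Q ->
  (cong P Q \/ hoio_bisimilar P Q) -> forall k, depth P k -> depth Q k.
Proof.
  intros HP HQ HPQ k HD.
  destruct HQ as (srt & GN & GP & T & HTQ).
  destruct (typed_has_depth _ _ _ _ _ HTQ) as [k' HD'].
  enough (k' = k) by (subst; exact HD').
  destruct HPQ as [C|(R & HR & HRPQ)].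
  - symmetry. apply (depth_sem Q k' HD'), (sem_cong _ _ C), depth_sem_self, HD.
  - assert (k <= k') by exact (bisim_depth_bound R HR k P Q HRPQ HP HD k' (depth_sem_self _ _ HD')).
    assert (k' <= k) by exact (bisim_depth_bound R HR k' Q P (proj1 HR P Q HRPQ)
                                 (typed_well_typed _ _ _ _ _ HTQ) HD' k (depth_sem_self _ _ HD)).
    lia.
Qed.

Lemma related_sym P Q : cong P Q \/ hoio_bisimilar P Q -> cong Q P \/ hoio_bisimilar Q P.
Proof.
  intros [C|(R & HR & HRPQ)]; [left; apply cg_sym, C|right; exists R; split; auto].
  apply (proj1 HR), HRPQ.
Qed.

Theorem mainTheorem3 (P Q : term) :
  well_typed P -> well_typed Q ->
  (cong P Q \/ hoio_bisimilar P Q) ->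
  forall k : nat, depth P k <-> depth Q k.
Proof.
  intros HP HQ HPQ k. split.
  - apply related_depth_transfer; auto.
  - apply related_depth_transfer, related_sym; auto.
Qed.
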